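(* If $\Gamma\vdash t:A$ is derivable in the simply typed distributive $\lambda$-calculus, then $t$ is strongly normalizing with respect to $\to_{\mathsf{dist}}$.
   Context: Terms: $t,s,u ::= x \mid \lambda x.t \mid ts \mid \langle t,s\rangle \mid \pi_1 t \mid \pi_2 t$ (up to $\alpha$-renaming); $t\{x:=s\}$ is capture-avoiding substitution. Top-level rules: $(\lambda x.t)s \mapsto t\{x:=s\}$; $\pi_i\langle t_1,t_2\rangle \mapsto t_i$ ($i=1,2$); $\langle t,s\rangle u \mapsto \langle tu, su\rangle$; $\pi_i(\lambda x.t)\mapsto \lambda x.\pi_i t$ ($i=1,2$); $\to_{\mathsf{dist}}$ is the closure of these rules under all term constructors. Types: $A ::= \tau \mid A\Rightarrow A \mid A\wedge A$ with $\tau$ a single atomic type. The relation $\equiv$ on types is the smallest equivalence relation containing $A\Rightarrow (B\wedge C)\equiv (A\Rightarrow B)\wedge(A\Rightarrow C)$ for all $A,B,C$ and closed under congruence for $\Rightarrow$ and $\wedge$ in both arguments. Typing rules: $\Gamma,x:A\vdash x:A$; if $\Gamma\vdash t:A$ and $A\equiv B$ then $\Gamma\vdash t:B$; if $\Gamma,x:A\vdash t:B$ then $\Gamma\vdash \lambda x.t:A\Rightarrow B$; if $\Gamma\vdash t:A\Rightarrow B$ and $\Gamma\vdash s:A$ then $\Gamma\vdash ts:B$; if $\Gamma\vdash t:A$ and $\Gamma\vdash s:B$ then $\Gamma\vdash\langle t,s\rangle:A\wedge B$; if $\Gamma\vdash t:A\wedge B$ then $\Gamma\vdash\pi_1 t:A$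 and $\Gamma\vdash \pi_2 t:B$. *)

From Stdlib Require Import Arith List.
Import ListNotations.

(* Terms up to alpha-renaming: de Bruijn indices. *)
Inductive tm : Type :=
| Var : nat -> tm
| Lam : tm -> tm
| App : tm -> tm -> tm
| Pair : tm -> tm -> tm
| Pi1 : tm -> tm
| Pi2 : tm -> tm.

Fixpoint lift (c : nat) (t : tm) : tm :=
  match t with
  | Var i => if i <? c then Var i else Var (S i)
  | Lam b => Lam (lift (S c) b)
  | App a b => App (lift c a) (lift c b)
  | Pair a b => Pair (lift c a) (lift c b)
  | Pi1 a => Pi1 (lift c a)
  | Pi2 a => Pi2 (lift c a)
  end.

(* subst j s t : capture-avoiding substitution of s for index j in t,
   decrementing the free indices above j (the binder is consumed). *)
Fixpoint subst (j : nat) (s : tm) (t : tm) : tm :=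
  match t with
  | Var i => if i =? j then s else if j <? i then Var (pred i) else Var i
  | Lam b => Lam (subst (S j) (lift 0 s) b)
  | App a b => App (subst j s a) (subst j s b)
  | Pair a b => Pair (subst j s a) (subst j s b)
  | Pi1 a => Pi1 (subst j s a)
  | Pi2 a => Pi2 (subst j s a)
  end.

(* t{x:=s} where x is the variable bound by the enclosing lambda *)
Definition subst0 (t s : tm) : tm := subst 0 s t.

Inductive top_step : tm -> tm -> Prop :=
| ts_beta : forall t s, top_step (App (Lam t) s) (subst0 t s)
| ts_pi1 : forall t1 t2, top_step (Pi1 (Pair t1 t2)) t1
| ts_pi2 : forall t1 t2, top_step (Pi2 (Pair t1 t2)) t2
| ts_app_pair : forall t s u, top_step (App (Pair t s) u) (Pair (App t u) (App s u))
| ts_pi1_lam : forall t, top_step (Pi1 (Lam t)) (Lam (Pi1 t))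
| ts_pi2_lam : forall t, top_step (Pi2 (Lam t)) (Lam (Pi2 t)).

Inductive dist_step : tm -> tm -> Prop :=
| ds_top : forall t t', top_step t t' -> dist_step t t'
| ds_lam : forall t t', dist_step t t' -> dist_step (Lam t) (Lam t')
| ds_appl : forall t t' s, dist_step t t' -> dist_step (App t s) (App t' s)
| ds_appr : forall t s s', dist_step s s' -> dist_step (App t s) (App t s')
| ds_pairl : forall t t' s, dist_step t t' -> dist_step (Pair t s) (Pair t' s)
| ds_pairr : forall t s s', dist_step s s' -> dist_step (Pair t s) (Pair t s')
| ds_pi1 : forall t t', dist_step t t' -> dist_step (Pi1 t) (Pi1 t')
| ds_pi2 : forall t t', dist_step t t' -> dist_step (Pi2 t) (Pi2 t').

Inductive SN : tm -> Prop :=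
| SN_intro : forall t, (forall t', dist_step t t' -> SN t') -> SN t.

Inductive ty : Type :=
| Tau : ty
| Arr : ty -> ty -> ty
| And : ty -> ty -> ty.

Inductive ty_equiv : ty -> ty -> Prop :=
| te_dist : forall A B C, ty_equiv (Arr A (And B C)) (And (Arr A B) (Arr A C))
| te_refl : forall A, ty_equiv A A
| te_sym : forall A B, ty_equiv A B -> ty_equiv B A
| te_trans : forall A B C, ty_equiv A B -> ty_equiv B C -> ty_equiv A C
| te_arr : forall A A' B B', ty_equiv A A' -> ty_equiv B B' -> ty_equiv (Arr A B) (Arr A' B')
| te_and : forall A A' B B', ty_equiv A A' -> ty_equiv B B' -> ty_equiv (And A B) (And A' B').

(* contexts: list of types, index i gives the type of de Bruijn variable i *)
Definition ctx := list ty.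

Inductive has_type : ctx -> tm -> ty -> Prop :=
| ht_var : forall G i A, nth_error G i = Some A -> has_type G (Var i) A
| ht_equiv : forall G t A B, has_type G t A -> ty_equiv A B -> has_type G t B
| ht_lam : forall G t A B, has_type (A :: G) t B -> has_type G (Lam t) (Arr A B)
| ht_app : forall G t s A B, has_type G t (Arr A B) -> has_type G s A -> has_type G (App t s) B
| ht_pair : forall G t s A B, has_type G t A -> has_type G s B -> has_type G (Pair t s) (And A B)
| ht_pi1 : forall G t A B, has_type G t (And A B) -> has_type G (Pi1 t) A
| ht_pi2 : forall G t A B, has_type G t (And A B) -> has_type G (Pi2 t) B.

(** Tait–Girard reducibility candidates.  The difficulty is the type
    equivalence [A => (B /\ C) == (A => B) /\ (A => C)]: interpreted naively,
    its two sides are different predicates, since [(pi1 t) u] and [pi1 (t u)]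
    are unrelated terms.  A type is therefore interpreted through its normal
    form [nf], where arrows are distributed below conjunctions so that no
    arrow has a conjunctive codomain; equivalent types have equal normal
    forms.  The rules [<t,s> u -> <t u, s u>] and [pi_i (\x.t) -> \x. pi_i t]
    are exactly what makes application and abstraction sound at such
    distributed types. *)

From Stdlib Require Import Arith List Lia.

Ltac index_cases :=
  repeat (match goal with
          | |- context [?x =? ?y] => destruct (Nat.eqb_spec x y)
          | |- context [?x <? ?y] => destruct (Nat.ltb_spec x y)
          end; cbn [subst lift pred]);
  try reflexivity; try (exfalso; lia); try (f_equal; lia).

Lemma lift_lift t i c : i <= c -> lift i (lift c t) = lift (S c) (lift i t).
Proof.
  induction t in i, c |- *; intros Hic; simpl; try (f_equal; auto with arith; fail).
  index_cases.
Qed.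

Lemma lift_subst t i j u : i <= j ->
  lift i (subst j u t) = subst (S j) (lift i u) (lift i t).
Proof.
  induction t in i, j, u |- *; intros Hij; simpl; try (f_equal; auto; fail).
  - index_cases.
  - rewrite IHt, (lift_lift u 0 i) by lia; reflexivity.
Qed.

Lemma subst_lift t k u : subst k u (lift k t) = t.
Proof. induction t in k, u |- *; simpl; try (f_equal; auto; fail). index_cases. Qed.

Lemma subst_subst t k j u v : k <= j ->
  subst j u (subst k v t) = subst k (subst j u v) (subst (S j) (lift k u) t).
Proof.
  induction t in k, j, u, v |- *; intros Hkj; simpl; try (f_equal; auto; fail).
  - index_cases. subst; rewrite subst_lift; reflexivity.
  - rewrite IHt, (lift_subst v 0 j u), (lift_lift u 0 k) by lia; reflexivity.
Qed.

Definition up (sg : nat -> tm) (i : nat) : tm :=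
  match i with 0 => Var 0 | S i => lift 0 (sg i) end.

Definition scons (u : tm) (sg : nat -> tm) (i : nat) : tm :=
  match i with 0 => u | S i => sg i end.

Fixpoint msubst (sg : nat -> tm) (t : tm) : tm :=
  match t with
  | Var i => sg i
  | Lam b => Lam (msubst (up sg) b)
  | App a b => App (msubst sg a) (msubst sg b)
  | Pair a b => Pair (msubst sg a) (msubst sg b)
  | Pi1 a => Pi1 (msubst sg a)
  | Pi2 a => Pi2 (msubst sg a)
  end.

Lemma msubst_ext sg sg' t : (forall i, sg i = sg' i) -> msubst sg t = msubst sg' t.
Proof.
  induction t in sg, sg' |- *; intros Hsg; cbn; f_equal; auto.
  apply IHt; intros [|i]; cbn; congruence.
Qed.

Lemma msubst_Var t : msubst Var t = t.
Proof.
  induction t; cbn; f_equal; auto.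
  rewrite <- IHt at 2; apply msubst_ext; intros [|i]; reflexivity.
Qed.

Lemma subst_msubst t k u sg :
  subst k u (msubst sg t) = msubst (fun i => subst k u (sg i)) t.
Proof.
  induction t in k, u, sg |- *; cbn; f_equal; auto.
  rewrite IHt; apply msubst_ext; intros [|i]; cbn.
  - reflexivity.
  - symmetry; apply lift_subst; lia.
Qed.

Lemma msubst_scons t u sg : subst0 (msubst (up sg) t) u = msubst (scons u sg) t.
Proof.
  unfold subst0; rewrite subst_msubst; apply msubst_ext; intros [|i]; cbn.
  - reflexivity.
  - apply subst_lift.
Qed.

Lemma dist_step_subst j u s s' :
  dist_step s s' -> dist_step (subst j u s) (subst j u s').
Proof.
  intros Hs; induction Hs in j, u |- *; cbn; try (constructor; auto; fail).
  destruct H; cbn; apply ds_top; try constructor.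
  unfold subst0; rewrite (subst_subst t 0 j u s) by lia; constructor.
Qed.

Lemma SN_step t t' : SN t -> dist_step t t' -> SN t'.
Proof. intros [? Hred]; apply Hred. Qed.

Lemma SN_of_image (f : tm -> tm) :
  (forall t t', dist_step t t' -> dist_step (f t) (f t')) ->
  forall t, SN (f t) -> SN t.
Proof.
  intros Hf t Hft; remember (f t) as ft eqn:E; induction Hft as [ft _ IH] in t, E |- *.
  subst; constructor; intros t' Hstep; exact (IH _ (Hf _ _ Hstep) t' eq_refl).
Qed.

Lemma Var_normal i t : ~ dist_step (Var i) t.
Proof. inversion 1 as [? ? Htop | | | | | | |]; inversion Htop. Qed.

Definition neutral (t : tm) : Prop :=
  match t with Lam _ | Pair _ _ => False | _ => True end.

Record candidate (P : tm -> Prop) : Prop := {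
  cand_SN : forall t, P t -> SN t;
  cand_step : forall t t', P t -> dist_step t t' -> P t';
  cand_neutral : forall t, neutral t -> (forall t', dist_step t t' -> P t') -> P t
}.
Arguments cand_SN {P}.
Arguments cand_step {P}.
Arguments cand_neutral {P}.

Definition arrow_sem (P Q : tm -> Prop) (t : tm) : Prop := forall u, P u -> Q (App t u).

Definition conj_sem (P Q : tm -> Prop) (t : tm) : Prop := P (Pi1 t) /\ Q (Pi2 t).

Lemma cand_Var P i : candidate P -> P (Var i).
Proof.
  intros HP; apply (cand_neutral HP); [exact I|].
  intros t Ht; contradiction (Var_normal _ _ Ht).
Qed.

Lemma SN_candidate : candidate SN.
Proof. split; [auto | exact SN_step | intros t _; exact (SN_intro t)]. Qed.

Lemma arrow_candidate P Q : candidate P -> candidate Q -> candidate (arrow_sem P Q).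
Proof.
  intros HP HQ; split.
  - intros t Ht.
    apply (SN_of_image (fun t => App t (Var 0))); [intros; now apply ds_appl|].
    exact (cand_SN HQ _ (Ht _ (cand_Var _ 0 HP))).
  - intros t t' Ht Hs u Hu; exact (cand_step HQ _ _ (Ht u Hu) (ds_appl _ _ _ Hs)).
  - intros t Hn Hred u Hu.
    pose proof (cand_SN HP u Hu) as Su; induction Su as [u _ IHu].
    apply (cand_neutral HQ); [exact I|].
    intros x Hx; inversion Hx as [? ? Htop | | ? ? ? Ht | ? ? ? Hu' | | | |]; subst.
    + inversion Htop; subst; contradiction.
    + now apply Hred.
    + exact (IHu _ Hu' (cand_step HP _ _ Hu Hu')).
Qed.

Lemma conj_candidate P Q : candidate P -> candidate Q -> candidate (conj_sem P Q).
Proof.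
  intros HP HQ; split.
  - intros t [Ht _]; apply (SN_of_image Pi1); [intros; now apply ds_pi1|].
    exact (cand_SN HP _ Ht).
  - intros t t' [Ht1 Ht2] Hs; split.
    + exact (cand_step HP _ _ Ht1 (ds_pi1 _ _ Hs)).
    + exact (cand_step HQ _ _ Ht2 (ds_pi2 _ _ Hs)).
  - intros t Hn Hred; split.
    + apply (cand_neutral HP); [exact I|].
      intros x Hx; inversion Hx as [? ? Htop | | | | | | ? ? Ht |]; subst.
      * inversion Htop; subst; contradiction.
      * now apply Hred.
    + apply (cand_neutral HQ); [exact I|].
      intros x Hx; inversion Hx as [? ? Htop | | | | | | | ? ? Ht]; subst.
      * inversion Htop; subst; contradiction.
      * now apply Hred.
Qed.

Lemma cand_Pi1_Pair P x y : candidate P -> P x -> SN y -> P (Pi1 (Pair x y)).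
Proof.
  intros HP Hx; pose proof (cand_SN HP x Hx) as Sx.
  induction Sx as [x _ IHx] in y, Hx |- *; intros Sy.
  induction Sy as [y Sy IHy].
  apply (cand_neutral HP); [exact I|].
  intros z Hz; inversion Hz as [? ? Htop | | | | | | ? ? Hp |]; subst.
  - inversion Htop; subst; assumption.
  - inversion Hp as [? ? Htop | | | | ? ? ? Hx' | ? ? ? Hy' | |]; subst.
    + inversion Htop.
    + exact (IHx _ Hx' _ (cand_step HP _ _ Hx Hx') (SN_intro y Sy)).
    + exact (IHy _ Hy').
Qed.

Lemma cand_Pi2_Pair P x y : candidate P -> SN x -> P y -> P (Pi2 (Pair x y)).
Proof.
  intros HP Sx Hy; pose proof (cand_SN HP y Hy) as Sy.
  induction Sy as [y _ IHy] in x, Sx, Hy |- *.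
  induction Sx as [x Sx IHx].
  apply (cand_neutral HP); [exact I|].
  intros z Hz; inversion Hz as [? ? Htop | | | | | | | ? ? Hp]; subst.
  - inversion Htop; subst; assumption.
  - inversion Hp as [? ? Htop | | | | ? ? ? Hx' | ? ? ? Hy' | |]; subst.
    + inversion Htop.
    + exact (IHx _ Hx').
    + exact (IHy _ Hy' _ (SN_intro x Sx) (cand_step HP _ _ Hy Hy')).
Qed.

Lemma cand_SN_body P Q s : candidate P -> candidate Q ->
  (forall u, P u -> Q (subst0 s u)) -> SN s.
Proof.
  intros HP HQ Hs.
  apply (SN_of_image (subst 0 (Var 0))); [intros; now apply dist_step_subst|].
  exact (cand_SN HQ _ (Hs _ (cand_Var _ 0 HP))).
Qed.

Lemma cand_beta P Q s : candidate P -> candidate Q ->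
  (forall u, P u -> Q (subst0 s u)) -> arrow_sem P Q (Lam s).
Proof.
  intros HP HQ Hs; pose proof (cand_SN_body _ _ _ HP HQ Hs) as Ss.
  induction Ss as [s _ IHs] in Hs |- *; intros u Hu.
  pose proof (cand_SN HP u Hu) as Su; induction Su as [u _ IHu].
  apply (cand_neutral HQ); [exact I|].
  intros x Hx; inversion Hx as [? ? Htop | | ? ? ? Hl | ? ? ? Hu' | | | |]; subst.
  - inversion Htop; subst; auto.
  - inversion Hl as [? ? Htop | ? s' Hs' | | | | | |]; subst; [inversion Htop|].
    apply IHs; [exact Hs' | | exact Hu].
    intros v Hv; exact (cand_step HQ _ _ (Hs v Hv) (dist_step_subst _ _ _ _ Hs')).
  - exact (IHu _ Hu' (cand_step HP _ _ Hu Hu')).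
Qed.

Lemma cand_Pi1_App P Q1 Q2 t u :
  candidate P -> candidate Q1 -> candidate Q2 ->
  arrow_sem P Q1 (Pi1 t) -> arrow_sem P Q2 (Pi2 t) -> P u -> Q1 (Pi1 (App t u)).
Proof.
  intros HP HQ1 HQ2 Ht1 Ht2 Hu.
  pose proof (arrow_candidate _ _ HP HQ1) as HA1.
  pose proof (arrow_candidate _ _ HP HQ2) as HA2.
  assert (St : SN t).
  { apply (SN_of_image Pi1); [intros; now apply ds_pi1|]. exact (cand_SN HA1 _ Ht1). }
  induction St as [t _ IHt] in Ht1, Ht2, u, Hu |- *.
  pose proof (cand_SN HP u Hu) as Su; induction Su as [u _ IHu].
  apply (cand_neutral HQ1); [exact I|].
  intros z Hz; inversion Hz as [? ? Htop | | | | | | ? ? Ha |]; subst; [inversion Htop|].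
  inversion Ha as [? ? Htop | | ? ? ? Ht' | ? ? ? Hu' | | | |]; subst.
  - inversion Htop as [t0 ? | | | t1 t2 ? | |]; subst.
    + (* [(\x. pi1 t0) u] beta-reduces to [pi1 (t0{u})] itself. *)
      pose proof (cand_step HA1 _ _ Ht1 (ds_top _ _ (ts_pi1_lam t0))) as Hl.
      exact (cand_step HQ1 _ _ (Hl u Hu) (ds_top _ _ (ts_beta _ _))).
    + apply cand_Pi1_Pair; [exact HQ1 | |].
      * exact (cand_step HA1 _ _ Ht1 (ds_top _ _ (ts_pi1 _ _)) u Hu).
      * exact (cand_SN HQ2 _ (cand_step HA2 _ _ Ht2 (ds_top _ _ (ts_pi2 _ _)) u Hu)).
  - apply IHt; auto.
    + exact (cand_step HA1 _ _ Ht1 (ds_pi1 _ _ Ht')).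
    + exact (cand_step HA2 _ _ Ht2 (ds_pi2 _ _ Ht')).
  - exact (IHu _ Hu' (cand_step HP _ _ Hu Hu')).
Qed.

Lemma cand_Pi2_App P Q1 Q2 t u :
  candidate P -> candidate Q1 -> candidate Q2 ->
  arrow_sem P Q1 (Pi1 t) -> arrow_sem P Q2 (Pi2 t) -> P u -> Q2 (Pi2 (App t u)).
Proof.
  intros HP HQ1 HQ2 Ht1 Ht2 Hu.
  pose proof (arrow_candidate _ _ HP HQ1) as HA1.
  pose proof (arrow_candidate _ _ HP HQ2) as HA2.
  assert (St : SN t).
  { apply (SN_of_image Pi2); [intros; now apply ds_pi2|]. exact (cand_SN HA2 _ Ht2). }
  induction St as [t _ IHt] in Ht1, Ht2, u, Hu |- *.
  pose proof (cand_SN HP u Hu) as Su; induction Su as [u _ IHu].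
  apply (cand_neutral HQ2); [exact I|].
  intros z Hz; inversion Hz as [? ? Htop | | | | | | | ? ? Ha]; subst; [inversion Htop|].
  inversion Ha as [? ? Htop | | ? ? ? Ht' | ? ? ? Hu' | | | |]; subst.
  - inversion Htop as [t0 ? | | | t1 t2 ? | |]; subst.
    + pose proof (cand_step HA2 _ _ Ht2 (ds_top _ _ (ts_pi2_lam t0))) as Hl.
      exact (cand_step HQ2 _ _ (Hl u Hu) (ds_top _ _ (ts_beta _ _))).
    + apply cand_Pi2_Pair; [exact HQ2 | |].
      * exact (cand_SN HQ1 _ (cand_step HA1 _ _ Ht1 (ds_top _ _ (ts_pi1 _ _)) u Hu)).
      * exact (cand_step HA2 _ _ Ht2 (ds_top _ _ (ts_pi2 _ _)) u Hu).
  - apply IHt; auto.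
    + exact (cand_step HA1 _ _ Ht1 (ds_pi1 _ _ Ht')).
    + exact (cand_step HA2 _ _ Ht2 (ds_pi2 _ _ Ht')).
  - exact (IHu _ Hu' (cand_step HP _ _ Hu Hu')).
Qed.

Fixpoint distr (a b : ty) : ty :=
  match b with
  | And b1 b2 => And (distr a b1) (distr a b2)
  | _ => Arr a b
  end.

Fixpoint nf (A : ty) : ty :=
  match A with
  | Tau => Tau
  | Arr A B => distr (nf A) (nf B)
  | And A B => And (nf A) (nf B)
  end.

Lemma nf_ty_equiv A B : ty_equiv A B -> nf A = nf B.
Proof. induction 1; cbn; congruence. Qed.

Fixpoint reducible (T : ty) : tm -> Prop :=
  match T with
  | Tau => SN
  | Arr A B => arrow_sem (reducible A) (reducible B)
  | And A B => conj_sem (reducible A) (reducible B)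
  end.

Lemma reducible_candidate T : candidate (reducible T).
Proof.
  induction T; cbn; auto using SN_candidate, arrow_candidate, conj_candidate.
Qed.

Lemma reducible_distr_arrow a b t :
  reducible (distr a b) t -> arrow_sem (reducible a) (reducible b) t.
Proof.
  induction b as [| |b1 IH1 b2 IH2] in t |- *; try exact (fun Ht => Ht).
  intros [Ht1 Ht2] u Hu; split.
  - apply (cand_Pi1_App (reducible a) (reducible b1) (reducible b2));
      auto using reducible_candidate.
  - apply (cand_Pi2_App (reducible a) (reducible b1) (reducible b2));
      auto using reducible_candidate.
Qed.

Lemma reducible_distr_Lam a b s :
  (forall u, reducible a u -> reducible b (subst0 s u)) -> reducible (distr a b) (Lam s).
Proof.
  pose proof (reducible_candidate a) as Ha.
  induction b as [| |b1 IH1 b2 IH2] in s |- *; intros Hs;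
    try exact (cand_beta _ _ _ Ha (reducible_candidate _) Hs).
  pose proof (cand_SN_body _ _ _ Ha (reducible_candidate (And b1 b2)) Hs) as Ss.
  induction Ss as [s _ IHs] in Hs |- *.
  assert (Hs' : forall s', dist_step s s' ->
            forall u, reducible a u -> reducible (And b1 b2) (subst0 s' u)).
  { intros s' Hss' u Hu.
    exact (cand_step (reducible_candidate _) _ _ (Hs u Hu) (dist_step_subst _ _ _ _ Hss')). }
  split.
  - apply (cand_neutral (reducible_candidate _)); [exact I|].
    intros x Hx; inversion Hx as [? ? Htop | | | | | | ? ? Hl |]; subst.
    + inversion Htop; subst; apply IH1; intros u Hu; exact (proj1 (Hs u Hu)).
    + inversion Hl as [? ? Htop | ? s' Hss' | | | | | |]; subst; [inversion Htop|].
      exact (proj1 (IHs _ Hss' (Hs' _ Hss'))).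
  - apply (cand_neutral (reducible_candidate _)); [exact I|].
    intros x Hx; inversion Hx as [? ? Htop | | | | | | | ? ? Hl]; subst.
    + inversion Htop; subst; apply IH2; intros u Hu; exact (proj2 (Hs u Hu)).
    + inversion Hl as [? ? Htop | ? s' Hss' | | | | | |]; subst; [inversion Htop|].
      exact (proj2 (IHs _ Hss' (Hs' _ Hss'))).
Qed.

Lemma has_type_reducible G t A : has_type G t A ->
  forall sg, (forall i B, nth_error G i = Some B -> reducible (nf B) (sg i)) ->
  reducible (nf A) (msubst sg t).
Proof.
  induction 1 as [G i A HG | G t A B _ IH Heq | G t A B _ IH
                 | G t s A B _ IHt _ IHs | G t s A B _ IHt _ IHs
                 | G t A B _ IH | G t A B _ IH]; intros sg Hsg; cbn.
  - exact (Hsg _ _ HG).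
  - rewrite <- (nf_ty_equiv _ _ Heq); auto.
  - apply reducible_distr_Lam; intros u Hu; rewrite msubst_scons.
    apply IH; intros [|i] C HC; cbn in *; [congruence|auto].
  - exact (reducible_distr_arrow _ _ _ (IHt sg Hsg) _ (IHs sg Hsg)).
  - pose proof (reducible_candidate (nf A)) as HA.
    pose proof (reducible_candidate (nf B)) as HB.
    split.
    + exact (cand_Pi1_Pair _ _ _ HA (IHt sg Hsg) (cand_SN HB _ (IHs sg Hsg))).
    + exact (cand_Pi2_Pair _ _ _ HB (cand_SN HA _ (IHt sg Hsg)) (IHs sg Hsg)).
  - exact (proj1 (IH sg Hsg)).
  - exact (proj2 (IH sg Hsg)).
Qed.

Theorem theorem4 : forall (G : ctx) (t : tm) (A : ty), has_type G t A -> SN t.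
Proof.
  intros G t A Ht.
  assert (Hid : forall i B, nth_error G i = Some B -> reducible (nf B) (Var i))
    by (intros; apply cand_Var, reducible_candidate).
  pose proof (has_type_reducible _ _ _ Ht Var Hid) as HR.
  rewrite msubst_Var in HR; exact (cand_SN (reducible_candidate _) _ HR).
Qed.
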